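(* Let $\eta_\varepsilon$ be as in the context. Fix $B>0$, $a\in(-1,1)$, $b\in(-1,1)$ and arbitrary real numbers $\dot a,\dot b,\dot B$ (treated as independent real parameters). Put $z=\varepsilon^{-1}B(x-a)$ and define $$ L_\varepsilon=\frac{\varepsilon\dot b}{\sqrt{1-b^2}}\int_{\mathbb R}\eta_\varepsilon^2(x)\tanh(z)\,dx+b\sqrt{1-b^2}\,B\dot a\int_{\mathbb R}\eta_\varepsilon^2(x)\,\mathrm{sech}^2(z)\,dx-\varepsilon b\sqrt{1-b^2}\,\dot B B^{-1}\int_{\mathbb R}\eta_\varepsilon^2(x)\,z\,\mathrm{sech}^2(z)\,dx $$ $$ \qquad+(1-b^2)B^2\int_{\mathbb R}\eta_\varepsilon^2(x)\,\mathrm{sech}^4(z)\,dx+\frac12(1-b^2)^2\int_{\mathbb R}\eta_\varepsilon^4(x)\,\mathrm{sech}^4(z)\,dx . $$ Then $$ \lim_{\varepsilon\to0}\frac{L_\varepsilon}{2\varepsilon}=-\frac{\dot b}{\sqrt{1-b^2}}\Big(a-\frac13a^3\Big)+b\sqrt{1-b^2}\,(1-a^2)\,\dot a+\frac23(1-a^2)(1-b^2)B+\frac{1}{3B}(1-a^2)^2(1-b^2)^2 . $$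
   Context: For all sufficiently small $\varepsilon>0$, $\eta_\varepsilon:\mathbb R\to(0,\infty)$ is a smooth solution of $\varepsilon^2\eta_\varepsilon''+(1-x^2-\eta_\varepsilon^2)\eta_\varepsilon=0$ on $\mathbb R$ that decays to zero as $|x|\to\infty$ faster than any exponential, and it has the following properties: $\eta_\varepsilon(x)\to\eta_0(x)$ pointwise as $\varepsilon\to0$, where $\eta_0(x)=(1-x^2)^{1/2}$ for $|x|<1$ and $\eta_0(x)=0$ for $|x|>1$; for every compact $K\subset(-1,1)$ there is $C_K>0$ with $\|\eta_\varepsilon-\eta_0\|_{C^1(K)}\le C_K\varepsilon^2$; and there is $C>0$ with $\|\eta_\varepsilon-\eta_0\|_{L^\infty}\le C\varepsilon^{1/3}$, $\|\eta_\varepsilon'\|_{L^\infty}\le C\varepsilon^{-1/3}$, $\|\eta_\varepsilon''\|_{L^\infty}\le C\varepsilon^{-1}$. ($L_\varepsilon$ is the Lagrangian $L(v)=\frac{i}{2}\varepsilon\int\eta_\varepsilon^2(v\bar v_t-\bar v v_t)dx+\varepsilon^2\int\eta_\varepsilon^2|v_x|^2dx+\frac12\int\eta_\varepsilon^4(1-|v|^2)^2dx$ evaluated on the dark-soliton ansatz $v=\sqrt{1-b^2}\tanh(\varepsilon^{-1}B(x-a))+ib$.) *)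

From Stdlib Require Import Reals Lra ClassicalEpsilon.
Open Scope R_scope.

(* Limiting profile eta_0(x) = sqrt(1-x^2) for |x|<1, 0 for |x|>1
   (value 0 at |x| = 1, which is immaterial). *)
Definition eta0 (x : R) : R :=
  if Rlt_dec (Rabs x) 1 then sqrt (1 - x ^ 2) else 0.

Definition deta0 (x : R) : R := - x / sqrt (1 - x ^ 2).

Definition sech (x : R) : R := / cosh x.

Definition is_improper_integral (f : R -> R) (l : R) : Prop :=
  exists I : forall u v : R, Riemann_integrable f u v,
    forall d, 0 < d -> exists M, forall u v, u < - M -> M < v ->
      Rabs (RiemannInt (I u v) - l) < d.

(* The value of the improper integral over R (chosen by classical choice;
   meaningful whenever the integral exists). *)
Definition ImpInt (f : R -> R) : R :=
  epsilon (inhabits 0) (fun l => is_improper_integral f l).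

(* Standing assumptions on the family eta_eps.
   D n eps x is the n-th x-derivative of eta_eps at x (D 0 eps = eta_eps);
   the assumptions hold for all 0 < eps < eps0. *)
Definition eta_family (eps0 : R) (D : nat -> R -> R -> R) : Prop :=
  0 < eps0 /\
  (forall eps, 0 < eps < eps0 -> forall n x,
      derivable_pt_lim (D n eps) x (D (S n) eps x)) /\
  (forall eps, 0 < eps < eps0 -> forall x, 0 < D 0%nat eps x) /\
  (forall eps, 0 < eps < eps0 -> forall x,
      eps ^ 2 * D 2%nat eps x + (1 - x ^ 2 - (D 0%nat eps x) ^ 2) * D 0%nat eps x = 0) /\
  (forall eps, 0 < eps < eps0 -> forall k d, 0 < d ->
      exists M, forall x, M < Rabs x -> Rabs (D 0%nat eps x) * exp (k * Rabs x) < d) /\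
  (forall x d, 0 < d -> exists e1, 0 < e1 /\
      forall eps, 0 < eps < e1 -> eps < eps0 -> Rabs (D 0%nat eps x - eta0 x) < d) /\
  (forall K : R -> Prop, compact K -> (forall x, K x -> -1 < x < 1) ->
      exists C, 0 < C /\ forall eps, 0 < eps < eps0 -> forall x, K x ->
        Rabs (D 0%nat eps x - eta0 x) + Rabs (D 1%nat eps x - deta0 x) <= C * eps ^ 2) /\
  (exists C, 0 < C /\ forall eps, 0 < eps < eps0 -> forall x,
      Rabs (D 0%nat eps x - eta0 x) <= C * Rpower eps (1/3) /\
      Rabs (D 1%nat eps x) <= C * Rpower eps (-(1/3)) /\
      Rabs (D 2%nat eps x) <= C * / eps).

Definition L_eps (eta : R -> R) (eps B a b ad bd Bd : R) : R :=
  let z := fun x => B * (x - a) / eps in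
  eps * bd / sqrt (1 - b ^ 2) * ImpInt (fun x => eta x ^ 2 * tanh (z x))
  + b * sqrt (1 - b ^ 2) * B * ad * ImpInt (fun x => eta x ^ 2 * sech (z x) ^ 2)
  - eps * b * sqrt (1 - b ^ 2) * Bd / B * ImpInt (fun x => eta x ^ 2 * z x * sech (z x) ^ 2)
  + (1 - b ^ 2) * B ^ 2 * ImpInt (fun x => eta x ^ 2 * sech (z x) ^ 4)
  + / 2 * (1 - b ^ 2) ^ 2 * ImpInt (fun x => eta x ^ 4 * sech (z x) ^ 4).

(* Put c = B / eps, so that z = c (x - a), and r = eps^(1/3).  Each integral
   in L_eps integrates eta_eps^2 or eta_eps^4 against a "soliton weight"
   tanh z, sech^2 z, sech^4 z or z sech^2 z, concentrated at x = a on the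
   scale 1/c = eps/B.
   - sech^2 z, sech^4 z: eta_eps^2 (resp. eta_eps^4) is replaced by its
     value 1 - a^2 (resp. (1 - a^2)^2) at x = a, at a cost O(r/c + 1/c^2)
     (uniform bound |eta_eps - eta0| <= C r plus the Lipschitz bound
     |eta0(x)^2 - (1 - a^2)| <= 2 |x - a|); the weights have masses 2/c and
     4/(3c).
   - z sech^2 z: the integral is O(1/c) = O(eps).
   - tanh z: on [-2, 2], eta_eps^2 is replaced by (1 - x^2)_+ and tanh z by
     sign (x - a), giving -2 (a - a^3/3) + O(r + 1/c); on |x| >= 2 the ODE
     gives eps^2 (eta eta')' >= 3 eta^2, so these tails are O(eps^2 / r).
   Hence L_eps / (2 eps) is within K r of its limit, K independent of eps. *)

From Stdlib Require Import Reals Psatz Lra ClassicalEpsilon FunctionalExtensionality Setoid Morphisms.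
Open Scope R_scope.

Definition contR (f : R -> R) := forall x, continuity_pt f x.

(* Pointwise closure rules for continuity, stated on lambda-terms so that the
   tactic [cont] below can apply them syntactically. *)
Lemma cont_const k x : continuity_pt (fun _ => k) x.
Proof. apply continuity_pt_const; intros ? ?; reflexivity. Qed.
Lemma cont_id x : continuity_pt (fun y => y) x.
Proof. apply derivable_continuous_pt, derivable_pt_id. Qed.
Lemma cont_plus f g x : continuity_pt f x -> continuity_pt g x -> continuity_pt (fun y => f y + g y) x.
Proof. exact (continuity_pt_plus f g x). Qed.
Lemma cont_minus f g x : continuity_pt f x -> continuity_pt g x -> continuity_pt (fun y => f y - g y) x.
Proof. exact (continuity_pt_minus f g x). Qed.
Lemma cont_mult f g x : continuity_pt f x -> continuity_pt g x -> continuity_pt (fun y => f y * g y) x.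
Proof. exact (continuity_pt_mult f g x). Qed.
Lemma cont_opp f x : continuity_pt f x -> continuity_pt (fun y => - f y) x.
Proof. exact (continuity_pt_opp f x). Qed.
Lemma cont_inv f x : continuity_pt f x -> f x <> 0 -> continuity_pt (fun y => / f y) x.
Proof. exact (continuity_pt_inv f x). Qed.
Lemma cont_div f g x : continuity_pt f x -> continuity_pt g x -> g x <> 0 -> continuity_pt (fun y => f y / g y) x.
Proof. exact (continuity_pt_div f g x). Qed.
Lemma cont_pow f n x : continuity_pt f x -> continuity_pt (fun y => f y ^ n) x.
Proof. intros H; induction n; simpl. apply cont_const. apply cont_mult; auto. Qed.
Lemma cont_comp f g x : continuity_pt g x -> continuity_pt f (g x) -> continuity_pt (fun y => f (g y)) x.
Proof. exact (continuity_pt_comp g f x). Qed.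
Lemma cont_app f g x : contR f -> continuity_pt g x -> continuity_pt (fun y => f (g y)) x.
Proof. intros Hf Hg. apply cont_comp; auto. Qed.

Lemma cosh_pos x : 0 < cosh x.
Proof. unfold cosh. pose proof (exp_pos x); pose proof (exp_pos (-x)). lra. Qed.

Lemma cont_tanh x : continuity_pt tanh x.
Proof.
  unfold tanh. apply cont_div; try apply derivable_continuous_pt.
  apply derivable_pt_sinh. apply derivable_pt_cosh. pose proof (cosh_pos x); lra.
Qed.
Lemma cont_sech x : continuity_pt sech x.
Proof.
  unfold sech. apply cont_inv. apply derivable_continuous_pt, derivable_pt_cosh.
  pose proof (cosh_pos x); lra.
Qed.

Lemma derivable_contR f f' : (forall x, derivable_pt_lim f x (f' x)) -> contR f.
Proof. intros H x. apply derivable_continuous_pt. exists (f' x). apply H. Qed.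

Ltac cont :=
  repeat (match goal with
  | |- contR _ => intro
  | |- continuity_pt (fun _ => ?k) _ => apply cont_const
  | |- continuity_pt (fun y => y) _ => apply cont_id
  | |- continuity_pt (fun y => _ + _) _ => apply cont_plus
  | |- continuity_pt (fun y => _ - _) _ => apply cont_minus
  | |- continuity_pt (fun y => _ * _) _ => apply cont_mult
  | |- continuity_pt (fun y => _ / _) _ => apply cont_div
  | |- continuity_pt (fun y => - _) _ => apply cont_opp
  | |- continuity_pt Ropp _ => apply (cont_opp (fun y => y)), cont_id
  | |- continuity_pt (fun y => _ ^ _) _ => apply cont_pow
  | |- continuity_pt (fun y => exp _) _ =>
      apply (cont_comp exp); [|apply derivable_continuous_pt, derivable_pt_exp]
  | |- continuity_pt exp _ => apply derivable_continuous_pt, derivable_pt_exp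
  | |- continuity_pt (fun y => tanh _) _ => apply (cont_comp tanh); [|apply cont_tanh]
  | |- continuity_pt (fun y => sech _) _ => apply (cont_comp sech); [|apply cont_sech]
  | |- continuity_pt (fun y => Rabs _) _ => apply (cont_comp Rabs); [|apply Rcontinuity_abs]
  | H : contR ?f |- continuity_pt (fun y => ?f _) _ => apply (cont_app f); [exact H|]
  | H : contR ?f |- continuity_pt ?f _ => apply H
  end); try (cbv beta; lra).

Lemma der_eq f x l l' : derivable_pt_lim f x l -> l = l' -> derivable_pt_lim f x l'.
Proof. intros H ->; exact H. Qed.
Lemma der_const k x : derivable_pt_lim (fun _ => k) x 0.
Proof. apply derivable_pt_lim_const. Qed.
Lemma der_id x : derivable_pt_lim (fun y => y) x 1.
Proof. apply derivable_pt_lim_id. Qed.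
Lemma der_plus f g x l m : derivable_pt_lim f x l -> derivable_pt_lim g x m ->
  derivable_pt_lim (fun y => f y + g y) x (l + m).
Proof. exact (derivable_pt_lim_plus f g x l m). Qed.
Lemma der_minus f g x l m : derivable_pt_lim f x l -> derivable_pt_lim g x m ->
  derivable_pt_lim (fun y => f y - g y) x (l - m).
Proof. exact (derivable_pt_lim_minus f g x l m). Qed.
Lemma der_mult f g x l m : derivable_pt_lim f x l -> derivable_pt_lim g x m ->
  derivable_pt_lim (fun y => f y * g y) x (l * g x + f x * m).
Proof. exact (derivable_pt_lim_mult f g x l m). Qed.
Lemma der_opp f x l : derivable_pt_lim f x l -> derivable_pt_lim (fun y => - f y) x (- l).
Proof. exact (derivable_pt_lim_opp f x l). Qed.
Lemma der_comp f g x l m : derivable_pt_lim g x l -> derivable_pt_lim f (g x) m ->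
  derivable_pt_lim (fun y => f (g y)) x (m * l).
Proof. exact (derivable_pt_lim_comp g f x l m). Qed.
Lemma der_pow f n x l : derivable_pt_lim f x l ->
  derivable_pt_lim (fun y => f y ^ n) x (INR n * f x ^ (pred n) * l).
Proof. intros H. apply (der_comp (fun t => t ^ n) f x l). exact H. apply derivable_pt_lim_pow. Qed.

Ltac dtac :=
  repeat (match goal with
  | |- derivable_pt_lim (fun _ => ?k) _ _ => apply der_const
  | |- derivable_pt_lim (fun y => y) _ _ => apply der_id
  | |- derivable_pt_lim (fun y => _ + _) _ _ => apply der_plus
  | |- derivable_pt_lim (fun y => _ - _) _ _ => apply der_minus
  | |- derivable_pt_lim (fun y => _ * _) _ _ => apply der_mult
  | |- derivable_pt_lim (fun y => - _) _ _ => apply der_opp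
  | |- derivable_pt_lim Ropp _ _ => apply (der_opp (fun y => y)), der_id
  | |- derivable_pt_lim (fun y => _ ^ _) _ _ => apply der_pow
  | |- derivable_pt_lim (fun y => exp _) _ _ => apply (der_comp exp); [|apply derivable_pt_lim_exp]
  | |- derivable_pt_lim exp _ _ => apply derivable_pt_lim_exp
  end).

Lemma Rabs_le_inv x y : Rabs x <= y -> - y <= x <= y.
Proof. intros H. pose proof (Rle_abs x). pose proof (Rle_abs (- x)). rewrite Rabs_Ropp in H1. lra. Qed.

Lemma abs_div_le x y k : 0 < y -> Rabs x <= k -> Rabs (x / y) <= k / y.
Proof.
  intros Hy H. unfold Rdiv. rewrite Rabs_mult, (Rabs_right (/ y)) by (left; apply Rinv_0_lt_compat; auto).
  apply Rmult_le_compat_r; auto. left; apply Rinv_0_lt_compat; auto.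
Qed.

Lemma div_nonneg a b : 0 <= a -> 0 < b -> 0 <= a / b.
Proof. intros; apply Rmult_le_pos; auto; left; apply Rinv_0_lt_compat; auto. Qed.

(* The Riemann integral over [u, v] as a total function (the value is
   independent of the integrability proof); meaningful when f is integrable,
   in particular for every continuous f. *)
Definition RI (f : R -> R) (u v : R) : R :=
  epsilon (inhabits 0) (fun l => exists pr : Riemann_integrable f u v, RiemannInt pr = l).

Lemma RI_eq f u v (pr : Riemann_integrable f u v) : RI f u v = RiemannInt pr.
Proof.
  unfold RI.
  assert (H : exists l, exists pr : Riemann_integrable f u v, RiemannInt pr = l)
    by (exists (RiemannInt pr), pr; reflexivity).
  destruct (epsilon_spec (inhabits 0) _ H) as [pr' E]. rewrite <- E; apply RiemannInt_P5.
Qed.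

Definition ri_of_cont f (H : contR f) u v : Riemann_integrable f u v :=
  match Rle_dec u v with
  | left h => @continuity_implies_RiemannInt f u v h (fun x _ => H x)
  | right h => RiemannInt_P1 (@continuity_implies_RiemannInt f v u
                                (Rlt_le _ _ (Rnot_le_lt _ _ h)) (fun x _ => H x))
  end.

Lemma RI_chasles f (H : contR f) u w v : RI f u w + RI f w v = RI f u v.
Proof.
  rewrite (RI_eq _ _ _ (ri_of_cont f H u w)), (RI_eq _ _ _ (ri_of_cont f H w v)),
          (RI_eq _ _ _ (ri_of_cont f H u v)).
  apply RiemannInt_P26.
Qed.

Lemma RI_lin f g l (Hf : contR f) (Hg : contR g) u v :
  RI (fun x => f x + l * g x) u v = RI f u v + l * RI g u v.
Proof.
  rewrite (RI_eq _ _ _ (RiemannInt_P10 l (ri_of_cont f Hf u v) (ri_of_cont g Hg u v))).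
  rewrite (RI_eq _ _ _ (ri_of_cont f Hf u v)), (RI_eq _ _ _ (ri_of_cont g Hg u v)).
  apply RiemannInt_P13.
Qed.

Lemma RI_le f g (Hf : contR f) (Hg : contR g) u v : u <= v ->
  (forall x, u <= x <= v -> f x <= g x) -> RI f u v <= RI g u v.
Proof.
  intros Huv H. rewrite (RI_eq _ _ _ (ri_of_cont f Hf u v)), (RI_eq _ _ _ (ri_of_cont g Hg u v)).
  apply RiemannInt_P19; auto. intros; apply H; lra.
Qed.

Lemma RI_abs_le f g (Hf : contR f) (Hg : contR g) u v : u <= v ->
  (forall x, u <= x <= v -> Rabs (f x) <= g x) -> Rabs (RI f u v) <= RI g u v.
Proof.
  intros Huv H. rewrite (RI_eq _ _ _ (ri_of_cont f Hf u v)).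
  eapply Rle_trans. apply (RiemannInt_P17 _ (RiemannInt_P16 (ri_of_cont f Hf u v))); auto.
  rewrite <- (RI_eq _ _ _ (RiemannInt_P16 (ri_of_cont f Hf u v))).
  apply RI_le; auto. intro; cont.
Qed.

Lemma RI_FTC F f : (forall x, derivable_pt_lim F x (f x)) -> contR f ->
  forall u v, RI f u v = F v - F u.
Proof.
  intros HD Hc u v.
  set (dF := (fun x => exist (fun l => derivable_pt_abs F x l) (f x) (HD x)) : derivable F).
  rewrite (RI_eq _ _ _ (ri_of_cont f Hc u v)).
  exact (@FTC_Riemann (@mkC1 F dF Hc) u v (ri_of_cont f Hc u v)).
Qed.

Lemma RI_swap f (H : contR f) u v : RI f u v = - RI f v u.
Proof. pose proof (RI_chasles f H u v u). pose proof (RI_chasles f H u u u). lra. Qed.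

Lemma RI_const k u v : RI (fun _ => k) u v = k * (v - u).
Proof. rewrite (RI_FTC (fun x => k * x)). ring. intros x. eapply der_eq. dtac. cbv beta; ring. cont. Qed.

Lemma RI_scal l g (Hg : contR g) u v : RI (fun x => l * g x) u v = l * RI g u v.
Proof.
  replace (fun x => l * g x) with (fun x => (fun _ => 0) x + l * g x)
    by (apply functional_extensionality; intros; ring).
  rewrite RI_lin; [|cont|auto]. rewrite RI_const. ring.
Qed.

Lemma RI_zero f (Hf : contR f) u v : u <= v -> (forall x, u <= x <= v -> f x = 0) -> RI f u v = 0.
Proof.
  intros Huv H. assert (Rabs (RI f u v) <= RI (fun _ => 0) u v).
  { apply RI_abs_le; auto. cont. intros x Hx. rewrite H by auto. rewrite Rabs_R0; lra. }
  rewrite RI_const in H0. pose proof (Rabs_pos (RI f u v)).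
  destruct (Req_dec (RI f u v) 0); auto.
  assert (0 < Rabs (RI f u v)) by (apply Rabs_pos_lt; auto). lra.
Qed.

Lemma improper_RI f l : is_improper_integral f l -> forall d, 0 < d -> exists M,
  forall u v, u < - M -> M < v -> Rabs (RI f u v - l) < d.
Proof.
  intros [I HI] d Hd. destruct (HI d Hd) as [M HM]. exists M; intros u v H1 H2.
  rewrite (RI_eq _ _ _ (I u v)). auto.
Qed.

Lemma improper_bound f l c Q : is_improper_integral f l ->
  (forall dl, 0 < dl -> exists M, forall u v, u < - M -> M < v -> Rabs (RI f u v - c) <= Q + dl) ->
  Rabs (l - c) <= Q.
Proof.
  intros Hl H. destruct (Rle_dec (Rabs (l - c)) Q) as [h|h]; auto. exfalso.
  set (dl := (Rabs (l - c) - Q) / 2).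
  assert (Hdl : 0 < dl) by (unfold dl; lra).
  destruct (improper_RI f l Hl dl Hdl) as [M1 HM1]. destruct (H dl Hdl) as [M2 HM2].
  set (T := Rabs M1 + Rabs M2 + 1).
  pose proof (Rle_abs M1); pose proof (Rabs_pos M1); pose proof (Rle_abs M2); pose proof (Rabs_pos M2).
  assert (A1 := HM1 (- T) T ltac:(unfold T; lra) ltac:(unfold T; lra)).
  assert (A2 := HM2 (- T) T ltac:(unfold T; lra) ltac:(unfold T; lra)).
  assert (Rabs (l - c) <= Rabs (RI f (-T) T - l) + Rabs (RI f (-T) T - c)).
  { replace (l - c) with (- (RI f (-T) T - l) + (RI f (-T) T - c)) by ring.
    eapply Rle_trans. apply Rabs_triang. rewrite Rabs_Ropp. lra. }
  unfold dl in *; lra.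
Qed.

Lemma improper_unique f l l' : is_improper_integral f l -> is_improper_integral f l' -> l = l'.
Proof.
  intros H1 H2.
  assert (forall Q, 0 < Q -> Rabs (l' - l) <= Q).
  { intros Q HQ. apply (improper_bound f l' l Q H2). intros dl Hdl.
    destruct (improper_RI f l H1 Q HQ) as [M HM]. exists M. intros u v Hu Hv.
    specialize (HM u v Hu Hv). lra. }
  destruct (Req_dec l l') as [e|ne]; auto. exfalso.
  assert (0 < Rabs (l' - l)) by (apply Rabs_pos_lt; lra).
  specialize (H (Rabs (l' - l) / 2) ltac:(lra)). lra.
Qed.

Lemma ImpInt_eq f l : is_improper_integral f l -> ImpInt f = l.
Proof.
  intros H. unfold ImpInt. apply improper_unique with f; auto.
  apply (epsilon_spec (inhabits 0) (fun l => is_improper_integral f l)). eauto.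
Qed.

Lemma exp_small K d : 0 <= K -> 0 < d -> exists T, 0 <= T /\ forall t, T <= t -> K * exp (- t) < d.
Proof.
  intros HK Hd. assert (Hid : 0 < / d) by (apply Rinv_0_lt_compat; auto).
  exists (K / d). split. apply Rmult_le_pos; lra.
  intros t Ht. rewrite exp_Ropp.
  assert (1 + t <= exp t) by apply exp_ineq1_le.
  assert (0 <= t) by (eapply Rle_trans; [|exact Ht]; apply Rmult_le_pos; lra).
  assert (K <= d * t) by (apply Rmult_le_reg_r with (/ d); [auto|];
     replace (d * t * / d) with t by (field; lra); exact Ht).
  apply Rmult_lt_reg_r with (exp t). apply exp_pos.
  rewrite Rmult_assoc, Rinv_l by (apply Rgt_not_eq, exp_pos). nra.
Qed.

Section Tails.
Variables (f : R -> R) (K M : R).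
Hypotheses (Hf : contR f) (HK : 0 <= K)
  (Hdecay : forall x, M < Rabs x -> Rabs (f x) <= K * exp (- Rabs x)).

Lemma tail_right T w v : M < T -> 0 <= T -> T <= w -> T <= v -> Rabs (RI f w v) <= K * exp (- T).
Proof.
  assert (key : forall w v, M < T -> 0 <= T -> T <= w -> w <= v -> Rabs (RI f w v) <= K * exp (- T)).
  { intros w' v' HM HT Hw Hwv.
    assert (Hg : contR (fun x => K * exp (- x))) by cont.
    eapply Rle_trans. apply (RI_abs_le f (fun x => K * exp (- x)) Hf Hg); auto.
    - intros x Hx. assert (Hx' : M < Rabs x) by (rewrite Rabs_right; lra).
      specialize (Hdecay x Hx'). rewrite (Rabs_right x) in Hdecay by lra. exact Hdecay.
    - rewrite (RI_FTC (fun x => - K * exp (- x))).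
      + assert (exp (- v') > 0) by apply exp_pos.
        assert (exp (- w') <= exp (- T)).
        { destruct (Req_dec w' T). subst; lra. left; apply exp_increasing; lra. }
        nra.
      + intros x. eapply der_eq. dtac. simpl; ring.
      + exact Hg. }
  intros HM HT Hw Hv. destruct (Rle_dec w v). apply key; auto.
  rewrite RI_swap by auto. rewrite Rabs_Ropp. apply key; lra.
Qed.

Lemma tail_left T u w : M < T -> 0 <= T -> u <= - T -> w <= - T -> Rabs (RI f u w) <= K * exp (- T).
Proof.
  assert (key : forall u w, M < T -> 0 <= T -> u <= w -> w <= - T -> Rabs (RI f u w) <= K * exp (- T)).
  { intros u' w' HM HT Huw Hw.
    assert (Hg : contR (fun x => K * exp x)) by cont.
    eapply Rle_trans. apply (RI_abs_le f (fun x => K * exp x) Hf Hg); auto.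
    - intros x Hx. assert (Hx' : M < Rabs x) by (rewrite Rabs_left1; lra).
      specialize (Hdecay x Hx'). rewrite (Rabs_left1 x) in Hdecay by lra.
      replace (- - x) with x in Hdecay by ring. exact Hdecay.
    - rewrite (RI_FTC (fun x => K * exp x)).
      + assert (exp u' > 0) by apply exp_pos.
        assert (exp w' <= exp (- T)).
        { destruct (Req_dec w' (- T)). subst; lra. left; apply exp_increasing; lra. }
        nra.
      + intros x. eapply der_eq. dtac. simpl; ring.
      + exact Hg. }
  intros HM HT Hu Hw. destruct (Rle_dec u w). apply key; auto.
  rewrite RI_swap by auto. rewrite Rabs_Ropp. apply key; lra.
Qed.

Lemma symmetric_integrals_cauchy : 0 <= M -> Cauchy_crit (fun n => RI f (- INR n) (INR n)).
Proof.
  intros HM e He. destruct (exp_small K (e / 2) HK ltac:(lra)) as [T [HT0 HT]].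
  destruct (INR_unbounded (Rmax T M + 1)) as [N HN].
  exists N. intros n m Hn Hm. unfold R_dist.
  assert (HNn := le_INR _ _ Hn). assert (HNm := le_INR _ _ Hm).
  assert (HTm : T <= Rmax T M) by apply Rmax_l. assert (HMm : M <= Rmax T M) by apply Rmax_r.
  set (S := Rmax T M + 1).
  rewrite <- (RI_chasles f Hf (- INR n) (- INR m)), <- (RI_chasles f Hf (- INR m) (INR m) (INR n)).
  replace (RI f (- INR n) (- INR m) + (RI f (- INR m) (INR m) + RI f (INR m) (INR n)) - RI f (- INR m) (INR m))
    with (RI f (- INR n) (- INR m) + RI f (INR m) (INR n)) by ring.
  eapply Rle_lt_trans. apply Rabs_triang.
  assert (A1 := tail_left S (- INR n) (- INR m)
                  ltac:(unfold S; lra) ltac:(unfold S; lra) ltac:(unfold S; lra) ltac:(unfold S; lra)).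
  assert (A2 := tail_right S (INR m) (INR n)
                  ltac:(unfold S; lra) ltac:(unfold S; lra) ltac:(unfold S; lra) ltac:(unfold S; lra)).
  assert (K * exp (- S) < e / 2) by (apply HT; unfold S; lra). lra.
Qed.

(* Its limit is the improper integral: beyond S the tails are uniformly small. *)
Lemma improper_exists_nonneg : 0 <= M -> exists l, is_improper_integral f l.
Proof.
  intros HM. destruct (R_complete _ (symmetric_integrals_cauchy HM)) as [l Hl]. exists l.
  exists (ri_of_cont f Hf). intros d Hd.
  destruct (Hl (d / 2) ltac:(lra)) as [N1 HN1].
  destruct (exp_small K (d / 4) HK ltac:(lra)) as [T [HT0 HT]].
  set (S := Rmax T M + 1).
  assert (HTm : T <= Rmax T M) by apply Rmax_l. assert (HMm : M <= Rmax T M) by apply Rmax_r.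
  assert (HS1 : M < S) by (unfold S; lra). assert (HS2 : 0 <= S) by (unfold S; lra).
  assert (HS3 : T <= S) by (unfold S; lra). clearbody S.
  exists S. intros u v Hu Hv.
  destruct (INR_unbounded S) as [N2 HN2].
  set (n := max N1 N2).
  assert (Hn1 : (n >= N1)%nat) by (unfold n; lia).
  assert (Hn2 : INR N2 <= INR n) by (apply le_INR; unfold n; lia).
  rewrite <- (RI_eq _ _ _ (ri_of_cont f Hf u v)).
  rewrite <- (RI_chasles f Hf u (- INR n)), <- (RI_chasles f Hf (- INR n) (INR n) v).
  specialize (HN1 n Hn1). unfold R_dist in HN1.
  assert (A1 := tail_left S u (- INR n) ltac:(lra) ltac:(lra) ltac:(lra) ltac:(lra)).
  assert (A2 := tail_right S (INR n) v ltac:(lra) ltac:(lra) ltac:(lra) ltac:(lra)).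
  assert (K * exp (- S) < d / 4) by (apply HT; lra).
  replace (RI f u (- INR n) + (RI f (- INR n) (INR n) + RI f (INR n) v) - l)
    with (RI f u (- INR n) + RI f (INR n) v + (RI f (- INR n) (INR n) - l)) by ring.
  eapply Rle_lt_trans. apply Rabs_triang. eapply Rle_lt_trans. apply Rplus_le_compat_r. apply Rabs_triang.
  lra.
Qed.

End Tails.

Lemma improper_exists f K M (Hf : contR f) :
  (forall x, M < Rabs x -> Rabs (f x) <= K * exp (- Rabs x)) -> exists l, is_improper_integral f l.
Proof.
  intros Hdecay. apply (improper_exists_nonneg f (Rabs K) (Rabs M) Hf (Rabs_pos K)); [|apply Rabs_pos].
  intros x Hx. eapply Rle_trans. apply Hdecay. pose proof (Rle_abs M); lra.
  apply Rmult_le_compat_r. left; apply exp_pos. apply Rle_abs.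
Qed.

Lemma ImpInt_bound f K M (Hf : contR f) c Q :
  (forall x, M < Rabs x -> Rabs (f x) <= K * exp (- Rabs x)) ->
  (forall dl, 0 < dl -> exists M, forall u v, u < - M -> M < v -> Rabs (RI f u v - c) <= Q + dl) ->
  Rabs (ImpInt f - c) <= Q.
Proof.
  intros Hb H. destruct (improper_exists f K M Hf Hb) as [l Hl]. rewrite (ImpInt_eq f l Hl).
  apply improper_bound with f; auto.
Qed.

Lemma cosh_E x : cosh x = (exp x + / exp x) / 2.
Proof. unfold cosh. rewrite exp_Ropp. reflexivity. Qed.
Lemma sinh_E x : sinh x = (exp x - / exp x) / 2.
Proof. unfold sinh. rewrite exp_Ropp. reflexivity. Qed.

Lemma cosh_ge1 x : 1 <= cosh x.
Proof.
  rewrite cosh_E. pose proof (exp_pos x). set (E := exp x) in *.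
  assert (E + / E - 2 = (E - 1) ^ 2 / E) by (field; lra).
  assert (0 <= (E - 1) ^ 2 / E) by (apply div_nonneg; [apply pow2_ge_0|lra]).
  lra.
Qed.

Lemma cosh_sinh x : cosh x ^ 2 - sinh x ^ 2 = 1.
Proof. rewrite cosh_E, sinh_E. pose proof (exp_pos x). field. lra. Qed.

Lemma sech_pos x : 0 < sech x.
Proof. unfold sech. apply Rinv_0_lt_compat, cosh_pos. Qed.
Lemma sech_le1 x : sech x <= 1.
Proof. unfold sech. pose proof (cosh_ge1 x). rewrite <- Rinv_1. apply Rinv_le_contravar; lra. Qed.

Lemma tanh_sech x : 1 - tanh x ^ 2 = sech x ^ 2.
Proof.
  unfold tanh, sech. pose proof (cosh_pos x). pose proof (cosh_sinh x).
  assert (Hs : sinh x ^ 2 = cosh x ^ 2 - 1) by lra.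
  replace ((sinh x / cosh x) ^ 2) with (sinh x ^ 2 / cosh x ^ 2) by (field; lra).
  rewrite Hs. field. lra.
Qed.

Lemma tanh_abs x : Rabs (tanh x) <= 1.
Proof.
  pose proof (tanh_sech x). pose proof (sech_pos x).
  assert (tanh x ^ 2 <= 1) by nra.
  apply Rabs_le. nra.
Qed.

Lemma derivable_pt_lim_tanh x : derivable_pt_lim tanh x (sech x ^ 2).
Proof.
  unfold tanh. eapply der_eq. apply (derivable_pt_lim_div sinh cosh). apply derivable_pt_lim_sinh. apply derivable_pt_lim_cosh.
  pose proof (cosh_pos x); lra.
  unfold sech, Rsqr. pose proof (cosh_pos x). pose proof (cosh_sinh x).
  assert (Hs : sinh x * sinh x = cosh x * cosh x - 1) by (simpl in H0; lra).
  rewrite Hs. field. lra.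
Qed.

Lemma exp_ge_2x t : 0 <= t -> 2 * t <= exp t.
Proof.
  intros Ht. replace t with (t / 2 + t / 2) at 2 by field. rewrite exp_plus.
  pose proof (exp_ineq1_le (t / 2)). pose proof (pow2_ge_0 (1 - t / 2)).
  set (e := exp (t / 2)) in *. nra.
Qed.

Lemma cosh_ge_exp_abs x : exp (Rabs x) / 2 <= cosh x.
Proof.
  unfold cosh. pose proof (exp_pos x). pose proof (exp_pos (- x)).
  destruct (Rle_dec 0 x). rewrite Rabs_right by lra. lra. rewrite Rabs_left by lra. lra.
Qed.

Lemma cosh_ge_abs x : Rabs x <= cosh x.
Proof. pose proof (cosh_ge_exp_abs x). pose proof (exp_ge_2x (Rabs x) (Rabs_pos x)). lra. Qed.

Lemma cosh_double x : cosh x = 2 * cosh (x / 2) ^ 2 - 1.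
Proof.
  rewrite !cosh_E. replace x with (x / 2 + x / 2) at 1 2 by field. rewrite exp_plus.
  pose proof (exp_pos (x / 2)). field. lra.
Qed.

(* |z| sech^2 z is dominated by a wider sech^2; this controls the moments
   |x - a| sech^2(c (x - a)) and z sech^2 z. *)
Lemma abs_mul_sech2 z : Rabs z * sech z ^ 2 <= 2 * sech (z / 2) ^ 2.
Proof.
  unfold sech. set (c := cosh (z / 2)).
  assert (Hc : 1 <= c) by apply cosh_ge1.
  assert (Hz : Rabs z <= 2 * c) by (pose proof (cosh_ge_abs (z / 2)); unfold c;
      unfold Rdiv in H; rewrite Rabs_mult, (Rabs_right (/ 2)) in H by lra; lra).
  assert (Hcz : c ^ 2 <= cosh z) by (rewrite cosh_double; fold c; nra).
  assert (0 < cosh z) by apply cosh_pos.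
  rewrite !pow_inv.
  apply Rle_trans with (Rabs z * / (c ^ 2) ^ 2).
  apply Rmult_le_compat_l. apply Rabs_pos. apply Rinv_le_contravar. apply pow_lt, pow_lt; lra. apply pow_incr; split; [nra|exact Hcz].
  apply Rle_trans with (2 * c * / (c ^ 2) ^ 2).
  apply Rmult_le_compat_r. left; apply Rinv_0_lt_compat; apply pow_lt, pow_lt; lra. auto.
  replace (2 * c * / (c ^ 2) ^ 2) with (2 * / c ^ 2 * / c) by (field; lra).
  assert (0 < / c ^ 2) by (apply Rinv_0_lt_compat; apply pow_lt; lra).
  assert (/ c <= 1) by (rewrite <- Rinv_1; apply Rinv_le_contravar; lra). nra.
Qed.

Lemma mul_sech2_bound z : Rabs (z * sech z ^ 2) <= 2.
Proof.
  rewrite Rabs_mult, (Rabs_right (sech z ^ 2)) by (apply Rle_ge, pow2_ge_0).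
  pose proof (abs_mul_sech2 z). pose proof (sech_le1 (z/2)). pose proof (sech_pos (z/2)). nra.
Qed.

Lemma one_minus_tanh y : 0 <= y -> 0 <= 1 - tanh y <= sech y ^ 2.
Proof.
  intros Hy. unfold tanh, sech. rewrite cosh_E, sinh_E.
  pose proof (exp_pos y). set (E := exp y) in *.
  assert (HE : 1 <= E) by (unfold E; pose proof (exp_ineq1_le y); lra).
  split.
  - assert (1 - (E - / E) / 2 / ((E + / E) / 2) = 2 / (E * E + 1)) by (field; nra).
    rewrite H0. apply div_nonneg; nra.
  - assert (1 - (E - / E) / 2 / ((E + / E) / 2) = 2 / (E * E + 1)) by (field; nra).
    rewrite H0. replace ((/ ((E + / E) / 2)) ^ 2) with (4 * (E * E) / ((E * E + 1) * (E * E + 1))) by (field; nra).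
    apply Rmult_le_reg_r with ((E * E + 1) * (E * E + 1)). nra.
    field_simplify; nra.
Qed.

Lemma one_plus_tanh y : y <= 0 -> 0 <= 1 + tanh y <= sech y ^ 2.
Proof.
  intros Hy. assert (tanh y = - tanh (- y)).
  { unfold tanh, sinh, cosh. rewrite Ropp_involutive. field. pose proof (exp_pos y); pose proof (exp_pos (-y)); lra. }
  assert (sech y = sech (- y)) by (unfold sech, cosh; rewrite Ropp_involutive; f_equal; field).
  rewrite H, H0. pose proof (one_minus_tanh (- y) ltac:(lra)). lra.
Qed.

Lemma sech_small dl : 0 < dl -> exists Y, 0 < Y /\ forall y, Y <= Rabs y -> sech y ^ 2 <= dl.
Proof.
  intros Hd. exists (/ dl + 1). split. assert (0 < / dl) by (apply Rinv_0_lt_compat; auto). lra.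
  intros y Hy. pose proof (sech_pos y). pose proof (sech_le1 y).
  assert (sech y <= dl).
  { unfold sech. pose proof (cosh_ge_abs y). assert (0 < / dl) by (apply Rinv_0_lt_compat; auto).
    replace dl with (/ / dl) by (field; lra). apply Rinv_le_contravar; lra. }
  nra.
Qed.

Lemma sech2_range y : 0 <= sech y ^ 2 <= 1.
Proof. pose proof (sech_le1 y). pose proof (sech_pos y). nra. Qed.

Lemma sech4_le y : 0 <= sech y ^ 4 <= sech y ^ 2.
Proof.
  pose proof (sech2_range y).
  replace (sech y ^ 4) with ((sech y ^ 2) ^ 2) by ring. nra.
Qed.

Lemma derivable_tanh_affine c a x : c <> 0 ->
  derivable_pt_lim (fun y => tanh (c * (y - a)) / c) x (sech (c * (x - a)) ^ 2).
Proof.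
  intros Hc. unfold Rdiv. eapply der_eq.
  apply der_mult; [apply (der_comp tanh (fun y => c * (y - a))); [dtac|apply derivable_pt_lim_tanh]|apply der_const].
  cbv beta. field. auto.
Qed.

Lemma sech2_integral c a (Hc : 0 < c) u v :
  RI (fun x => sech (c * (x - a)) ^ 2) u v = (tanh (c * (v - a)) - tanh (c * (u - a))) / c.
Proof.
  rewrite (RI_FTC (fun y => tanh (c * (y - a)) / c)).
  field; lra.
  intros x. apply derivable_tanh_affine; lra.
  cont.
Qed.

(* A primitive of sech^4 = sech^2 (1 - tanh^2). *)
Definition sech4_prim t := tanh t - tanh t ^ 3 / 3.

Lemma sech4_integral c a (Hc : 0 < c) u v :
  RI (fun x => sech (c * (x - a)) ^ 4) u v
  = (sech4_prim (c * (v - a)) - sech4_prim (c * (u - a))) / c.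
Proof.
  rewrite (RI_FTC (fun y => sech4_prim (c * (y - a)) / c)).
  field; lra.
  intros x. unfold sech4_prim, Rdiv. eapply der_eq.
  { apply der_mult; [|apply der_const]. apply der_minus.
    - apply (der_comp tanh (fun y => c * (y - a))). dtac. apply derivable_pt_lim_tanh.
    - apply der_mult; [|apply der_const]. apply der_pow.
      apply (der_comp tanh (fun y => c * (y - a))). dtac. apply derivable_pt_lim_tanh. }
  cbv beta. replace (sech (c * (x - a)) ^ 4) with ((sech (c * (x - a)) ^ 2) ^ 2) by ring.
  rewrite <- (tanh_sech (c * (x - a))). replace (INR 3) with 3 by (simpl; ring). simpl. field. lra.
  cont.
Qed.

Lemma tanh_ends c a (Hc : 0 < c) dl : 0 < dl -> exists M, forall u v, u < - M -> M < v ->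
  (0 <= 1 - tanh (c * (v - a)) <= dl) /\ (0 <= 1 + tanh (c * (u - a)) <= dl).
Proof.
  intros Hd. destruct (sech_small dl Hd) as [Y [HY H]].
  exists (Rabs a + Y / c). intros u v Hu Hv.
  assert (0 < Y / c) by (apply Rdiv_lt_0_compat; lra).
  pose proof (Rle_abs a). pose proof (Rle_abs (- a)). rewrite Rabs_Ropp in H2.
  assert (Hv1 : Y / c <= v - a) by lra. assert (Hu1 : Y / c <= a - u) by lra.
  assert (Hv2 : Y <= c * (v - a)).
  { apply Rmult_le_reg_l with (/ c). apply Rinv_0_lt_compat; auto.
    replace (/ c * (c * (v - a))) with (v - a) by (field; lra). unfold Rdiv in Hv1. lra. }
  assert (Hu2 : Y <= - (c * (u - a))).
  { apply Rmult_le_reg_l with (/ c). apply Rinv_0_lt_compat; auto.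
    replace (/ c * - (c * (u - a))) with (a - u) by (field; lra). unfold Rdiv in Hu1. lra. }
  split.
  - pose proof (one_minus_tanh (c * (v - a)) ltac:(lra)).
    assert (sech (c * (v - a)) ^ 2 <= dl) by (apply H; rewrite Rabs_right; lra). lra.
  - pose proof (one_plus_tanh (c * (u - a)) ltac:(lra)).
    assert (sech (c * (u - a)) ^ 2 <= dl) by (apply H; rewrite Rabs_left1; lra). lra.
Qed.

Lemma sech2_mass c a (Hc : 0 < c) dl : 0 < dl -> exists M, forall u v, u < - M -> M < v ->
  Rabs (RI (fun x => sech (c * (x - a)) ^ 2) u v - 2 / c) <= dl.
Proof.
  intros Hd. destruct (tanh_ends c a Hc (dl * c / 2)) as [M H]. pose proof (Rmult_lt_0_compat dl c Hd Hc); lra.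
  exists M. intros u v Hu Hv. destruct (H u v Hu Hv) as [H1 H2]. rewrite sech2_integral by auto.
  replace ((tanh (c * (v - a)) - tanh (c * (u - a))) / c - 2 / c) with
    (- ((1 - tanh (c * (v - a))) + (1 + tanh (c * (u - a)))) / c) by (field; lra).
  unfold Rdiv. rewrite Rabs_mult, (Rabs_right (/ c)) by (apply Rle_ge; left; apply Rinv_0_lt_compat; auto).
  rewrite Rabs_Ropp, Rabs_right by lra.
  apply Rmult_le_reg_r with c; auto. rewrite Rmult_assoc, Rinv_l by lra. lra.
Qed.

Lemma sech4_prim_right t : Rabs (sech4_prim t - 2 / 3) <= 2 * (1 - tanh t).
Proof.
  unfold sech4_prim. pose proof (tanh_abs t). apply Rabs_le_inv in H. set (T := tanh t) in *.
  replace (T - T ^ 3 / 3 - 2 / 3) with (- ((1 - T) * ((1 - T) * (2 + T))) / 3) by field.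
  assert (0 <= (1 - T) * (2 + T) <= 3) by nra.
  assert (0 <= 1 - T) by lra.
  apply Rabs_le. split; nra.
Qed.

Lemma sech4_prim_left t : Rabs (sech4_prim t + 2 / 3) <= 2 * (1 + tanh t).
Proof.
  unfold sech4_prim. pose proof (tanh_abs t). apply Rabs_le_inv in H. set (T := tanh t) in *.
  replace (T - T ^ 3 / 3 + 2 / 3) with (((1 + T) * ((1 + T) * (2 - T))) / 3) by field.
  assert (0 <= (1 + T) * (2 - T) <= 3) by nra.
  assert (0 <= 1 + T) by lra.
  apply Rabs_le. split; nra.
Qed.

Lemma sech4_mass c a (Hc : 0 < c) dl : 0 < dl -> exists M, forall u v, u < - M -> M < v ->
  Rabs (RI (fun x => sech (c * (x - a)) ^ 4) u v - 4 / (3 * c)) <= dl.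
Proof.
  intros Hd. destruct (tanh_ends c a Hc (dl * c / 4)) as [M H]. pose proof (Rmult_lt_0_compat dl c Hd Hc); lra.
  exists M. intros u v Hu Hv. destruct (H u v Hu Hv) as [H1 H2]. rewrite sech4_integral by auto.
  pose proof (sech4_prim_right (c * (v - a))). pose proof (sech4_prim_left (c * (u - a))).
  replace ((sech4_prim (c * (v - a)) - sech4_prim (c * (u - a))) / c - 4 / (3 * c)) with
    (((sech4_prim (c * (v - a)) - 2 / 3) - (sech4_prim (c * (u - a)) + 2 / 3)) / c) by (field; lra).
  unfold Rdiv. rewrite Rabs_mult, (Rabs_right (/ c)) by (apply Rle_ge; left; apply Rinv_0_lt_compat; auto).
  apply Rmult_le_reg_r with c; auto. rewrite Rmult_assoc, Rinv_l by lra. rewrite Rmult_1_r.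
  eapply Rle_trans. apply Rabs_triang. rewrite Rabs_Ropp. lra.
Qed.

Lemma sech2_partial_mass c a (Hc : 0 < c) u v : u <= v ->
  0 <= RI (fun x => sech (c * (x - a)) ^ 2) u v <= 2 / c.
Proof.
  intros Huv. rewrite sech2_integral by auto.
  pose proof (tanh_abs (c * (v - a))). pose proof (tanh_abs (c * (u - a))).
  apply Rabs_le_inv in H. apply Rabs_le_inv in H0.
  assert (tanh (c * (u - a)) <= tanh (c * (v - a))).
  { assert (0 <= RI (fun x => sech (c * (x - a)) ^ 2) u v).
    { apply Rle_trans with (RI (fun _ => 0) u v).
      rewrite RI_const. lra.
      apply RI_le; auto. cont. cont. intros. apply pow2_ge_0. }
    rewrite sech2_integral in H1 by auto. unfold Rdiv in H1.
    assert (0 < / c) by (apply Rinv_0_lt_compat; auto). nra. }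
  assert (0 < / c) by (apply Rinv_0_lt_compat; auto).
  unfold Rdiv. split; nra.
Qed.

(* The limiting density rho0 = eta0^2 = (1 - x^2)_+ (written without case
   analysis, so that it is visibly continuous). *)
Definition rho0 x := (1 - x ^ 2 + Rabs (1 - x ^ 2)) / 2.

Lemma rho0_cont : contR rho0.
Proof. unfold rho0. cont. Qed.

Lemma rho0_inside x : 0 <= 1 - x ^ 2 -> rho0 x = 1 - x ^ 2.
Proof. intros H. unfold rho0. rewrite Rabs_right by lra. field. Qed.
Lemma rho0_outside x : 1 - x ^ 2 <= 0 -> rho0 x = 0.
Proof. intros H. unfold rho0. rewrite Rabs_left1 by lra. field. Qed.

Lemma eta0_sq x : eta0 x ^ 2 = rho0 x.
Proof.
  unfold eta0. destruct (Rlt_dec (Rabs x) 1).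
  - assert (0 <= 1 - x ^ 2).
    { pose proof (Rabs_pos x). rewrite <- (pow2_abs x). nra. }
    rewrite pow2_sqrt by auto. rewrite rho0_inside; auto.
  - assert (1 - x ^ 2 <= 0). { rewrite <- (pow2_abs x). nra. }
    rewrite rho0_outside; auto. ring.
Qed.

Lemma rho0_range x : 0 <= rho0 x <= 1.
Proof.
  destruct (Rle_dec 0 (1 - x ^ 2)). rewrite rho0_inside by auto. pose proof (pow2_ge_0 x). lra.
  rewrite rho0_outside by lra. lra.
Qed.

Lemma eta0_abs x : Rabs (eta0 x) <= 1.
Proof.
  pose proof (eta0_sq x). pose proof (rho0_range x). rewrite <- (pow2_abs) in H.
  pose proof (Rabs_pos (eta0 x)). nra.
Qed.

Lemma rho0_lipschitz a x : -1 < a < 1 -> Rabs (rho0 x - (1 - a ^ 2)) <= 2 * Rabs (x - a).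
Proof.
  intros Ha. destruct (Rle_dec 0 (1 - x ^ 2)).
  - rewrite rho0_inside by auto. replace (1 - x ^ 2 - (1 - a ^ 2)) with ((a - x) * (a + x)) by ring.
    rewrite Rabs_mult. rewrite <- Rabs_Ropp. replace (- (a - x)) with (x - a) by ring.
    rewrite Rmult_comm. apply Rmult_le_compat_r. apply Rabs_pos.
    apply Rabs_le. nra.
  - rewrite rho0_outside by lra. rewrite Rminus_0_l, Rabs_Ropp, Rabs_right by nra.
    destruct (Rle_dec x a).
    + rewrite Rabs_left1 by lra. assert (x < -1) by nra. nra.
    + rewrite Rabs_right by lra. assert (1 < x) by nra. nra.
Qed.


Definition quad_prim x := x - x ^ 3 / 3.

Lemma RI_quad u v : RI (fun x => 1 - x ^ 2) u v = quad_prim v - quad_prim u.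
Proof.
  unfold quad_prim. rewrite (RI_FTC (fun x => x - x ^ 3 / 3)). ring.
  intros x. unfold Rdiv. eapply der_eq. dtac. cbv beta. simpl. field. cont.
Qed.

(* On either side of a, replacing tanh (c (x - a)) by its sign -1 or +1
   against rho0 = 1 - x^2 costs at most the sech^2-mass 2/c. *)
Lemma tanh_sign_left c a : 0 < c -> -1 < a < 1 ->
  Rabs (RI (fun x => rho0 x * tanh (c * (x - a))) (-1) a + RI (fun x => 1 - x ^ 2) (-1) a) <= 2 / c.
Proof.
  intros Hc Ha. pose proof rho0_cont.
  rewrite <- (Rmult_1_l (RI (fun x => 1 - x ^ 2) _ _)), <- RI_lin by cont.
  eapply Rle_trans. apply (RI_abs_le _ (fun x => sech (c * (x - a)) ^ 2)); [cont|cont|lra|].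
  - intros x Hx. assert (0 <= 1 - x ^ 2 <= 1) by (pose proof (pow2_ge_0 x); nra).
    rewrite rho0_inside by lra.
    assert (c * (x - a) <= 0) by (assert (0 <= c * (a - x)) by (apply Rmult_le_pos; lra); lra).
    pose proof (one_plus_tanh _ H1).
    replace ((1 - x ^ 2) * tanh (c * (x - a)) + 1 * (1 - x ^ 2))
      with ((1 - x ^ 2) * (1 + tanh (c * (x - a)))) by ring.
    rewrite Rabs_right by (apply Rle_ge, Rmult_le_pos; lra). nra.
  - apply sech2_partial_mass; auto. lra.
Qed.

Lemma tanh_sign_right c a : 0 < c -> -1 < a < 1 ->
  Rabs (RI (fun x => rho0 x * tanh (c * (x - a))) a 1 - RI (fun x => 1 - x ^ 2) a 1) <= 2 / c.
Proof.
  intros Hc Ha. pose proof rho0_cont.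
  replace (RI (fun x => rho0 x * tanh (c * (x - a))) a 1 - RI (fun x => 1 - x ^ 2) a 1)
    with (RI (fun x => rho0 x * tanh (c * (x - a)) + - (1) * (1 - x ^ 2)) a 1)
    by (rewrite RI_lin by cont; ring).
  eapply Rle_trans. apply (RI_abs_le _ (fun x => sech (c * (x - a)) ^ 2)); [cont|cont|lra|].
  - intros x Hx. assert (0 <= 1 - x ^ 2 <= 1) by (pose proof (pow2_ge_0 x); nra).
    rewrite rho0_inside by lra.
    assert (0 <= c * (x - a)) by (apply Rmult_le_pos; lra).
    pose proof (one_minus_tanh _ H1).
    replace ((1 - x ^ 2) * tanh (c * (x - a)) + - (1) * (1 - x ^ 2))
      with (- ((1 - x ^ 2) * (1 - tanh (c * (x - a))))) by ring.
    rewrite Rabs_Ropp, Rabs_right by (apply Rle_ge, Rmult_le_pos; lra). nra.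
  - apply sech2_partial_mass; auto. lra.
Qed.

(* The tanh-moment of the limiting density: rho0 vanishes outside (-1, 1)
   and the signed integral of 1 - x^2 over (-1, 1) is -2 quad_prim a. *)
Lemma tanh_moment_rho0 c a : 0 < c -> -1 < a < 1 ->
  Rabs (RI (fun x => rho0 x * tanh (c * (x - a))) (-2) 2 + 2 * quad_prim a) <= 4 / c.
Proof.
  intros Hc Ha. pose proof (tanh_sign_left c a Hc Ha) as Hleft.
  pose proof (tanh_sign_right c a Hc Ha) as Hright.
  set (g := fun x => rho0 x * tanh (c * (x - a))) in *.
  assert (Hg : contR g) by (unfold g; pose proof rho0_cont; cont).
  assert (Hout1 : RI g (-2) (-1) = 0).
  { apply RI_zero; auto. lra. intros x Hx. unfold g. rewrite rho0_outside. ring. nra. }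
  assert (Hout2 : RI g 1 2 = 0).
  { apply RI_zero; auto. lra. intros x Hx. unfold g. rewrite rho0_outside. ring. nra. }
  rewrite <- (RI_chasles g Hg (-2) (-1)), <- (RI_chasles g Hg (-1) a 2), <- (RI_chasles g Hg a 1 2).
  rewrite Hout1, Hout2, !RI_quad in *.
  replace (0 + (RI g (-1) a + (RI g a 1 + 0)) + 2 * quad_prim a)
    with ((RI g (-1) a + (quad_prim a - quad_prim (-1))) + (RI g a 1 - (quad_prim 1 - quad_prim a)))
    by (unfold quad_prim; field).
  eapply Rle_trans. apply Rabs_triang. lra.
Qed.

Lemma abs_dist_sech2 c a x : 0 < c ->
  Rabs (x - a) * sech (c * (x - a)) ^ 2 <= 2 / c * sech (c / 2 * (x - a)) ^ 2.
Proof.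
  intros Hc. pose proof (abs_mul_sech2 (c * (x - a))).
  rewrite Rabs_mult, (Rabs_right c) in H by lra.
  replace (c * (x - a) / 2) with (c / 2 * (x - a)) in H by field.
  apply Rmult_le_reg_l with c; auto.
  replace (c * (2 / c * sech (c / 2 * (x - a)) ^ 2)) with (2 * sech (c / 2 * (x - a)) ^ 2) by (field; lra).
  lra.
Qed.

Section Localisation.
Variables (g w : R -> R) (c a q A L : R).
Hypotheses (Hg : contR g) (Hw : contR w) (Hc : 0 < c) (HA : 0 <= A) (HL : 0 <= L)
  (Hnear : forall x, Rabs (g x - q) <= A + L * Rabs (x - a))
  (Hweight : forall x, 0 <= w x <= sech (c * (x - a)) ^ 2).

Lemma localised_integral u v : u <= v ->
  Rabs (RI (fun x => g x * w x) u v - q * RI w u v) <= 2 * A / c + 8 * L / c ^ 2.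
Proof.
  intros Huv.
  replace (RI (fun x => g x * w x) u v - q * RI w u v) with (RI (fun x => g x * w x + - q * w x) u v)
    by (rewrite RI_lin by cont; ring).
  assert (Hc2 : 0 < c / 2) by lra.
  set (dom := fun x => A * sech (c * (x - a)) ^ 2 + (2 * L / c) * sech (c / 2 * (x - a)) ^ 2).
  eapply Rle_trans. apply (RI_abs_le _ dom); [cont|unfold dom; cont|auto|].
  - intros x _. replace (g x * w x + - q * w x) with ((g x - q) * w x) by ring.
    rewrite Rabs_mult, (Rabs_right (w x)) by (apply Rle_ge; apply Hweight).
    specialize (Hnear x). destruct (Hweight x). pose proof (abs_dist_sech2 c a x Hc).
    pose proof (Rabs_pos (x - a)).
    apply Rle_trans with (A * w x + L * (Rabs (x - a) * sech (c * (x - a)) ^ 2)).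
    { replace (A * w x + L * (Rabs (x - a) * sech (c * (x - a)) ^ 2))
        with ((A + L * Rabs (x - a)) * w x + L * (Rabs (x - a) * (sech (c * (x - a)) ^ 2 - w x))) by ring.
      assert (0 <= L * (Rabs (x - a) * (sech (c * (x - a)) ^ 2 - w x)))
        by (apply Rmult_le_pos; auto; apply Rmult_le_pos; lra).
      assert (Rabs (g x - q) * w x <= (A + L * Rabs (x - a)) * w x) by (apply Rmult_le_compat_r; auto).
      lra. }
    unfold dom. apply Rplus_le_compat. apply Rmult_le_compat_l; auto.
    replace (2 * L / c * sech (c / 2 * (x - a)) ^ 2) with (L * (2 / c * sech (c / 2 * (x - a)) ^ 2))
      by (field; lra).
    apply Rmult_le_compat_l; auto.
  - unfold dom. rewrite RI_lin by cont. rewrite RI_scal by cont.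
    destruct (sech2_partial_mass c a Hc u v Huv). destruct (sech2_partial_mass (c / 2) a Hc2 u v Huv).
    assert (0 <= 2 * L / c) by (apply div_nonneg; lra).
    apply Rle_trans with (A * (2 / c) + 2 * L / c * (2 / (c / 2))).
    apply Rplus_le_compat; apply Rmult_le_compat_l; auto.
    right; field; lra.
Qed.

Lemma localised_ImpInt m : Rabs q <= 1 ->
  (forall dl, 0 < dl -> exists M, forall u v, u < - M -> M < v -> Rabs (RI w u v - m) <= dl) ->
  (exists M K, forall x, M < Rabs x -> Rabs (g x * w x) <= K * exp (- Rabs x)) ->
  Rabs (ImpInt (fun x => g x * w x) - q * m) <= 2 * A / c + 8 * L / c ^ 2.
Proof.
  intros Hq Hmass [M [K Hdec]].
  apply (ImpInt_bound _ K M); [cont|auto|].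
  intros dl Hdl. destruct (Hmass dl Hdl) as [M1 HM1]. exists (Rabs M1). intros u v Hu Hv.
  pose proof (Rle_abs M1). pose proof (Rabs_pos M1).
  pose proof (localised_integral u v ltac:(lra)).
  specialize (HM1 u v ltac:(lra) ltac:(lra)).
  replace (RI (fun x => g x * w x) u v - q * m)
    with ((RI (fun x => g x * w x) u v - q * RI w u v) + q * (RI w u v - m)) by ring.
  eapply Rle_trans. apply Rabs_triang. rewrite Rabs_mult.
  assert (Rabs q * Rabs (RI w u v - m) <= dl).
  { apply Rle_trans with (1 * dl). apply Rmult_le_compat; auto using Rabs_pos. lra. }
  lra.
Qed.

End Localisation.

(* A single profile eta = e with derivatives e1, e2, as provided by the
   standing assumptions for one fixed eps, with r = eps^(1/3): it solves the
   ODE, decays exponentially, is uniformly within C r of eta0, and its slope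
   is at most C / r. *)
Record profile (e e1 e2 : R -> R) (eps C r : R) : Prop := {
  prof_deriv0 : forall x, derivable_pt_lim e x (e1 x);
  prof_deriv1 : forall x, derivable_pt_lim e1 x (e2 x);
  prof_cont2 : contR e2;
  prof_ode : forall x, eps ^ 2 * e2 x + (1 - x ^ 2 - e x ^ 2) * e x = 0;
  prof_decay : exists M, forall x, M < Rabs x -> Rabs (e x) * exp (Rabs x) < 1;
  prof_close : forall x, Rabs (e x - eta0 x) <= C * r;
  prof_slope : forall x, Rabs (e1 x) <= C / r;
  prof_C : 0 < C;
  prof_r : 0 < r <= 1 }.

Section Profile.
Variables (e e1 e2 : R -> R) (eps C r : R).
Hypothesis Hp : profile e e1 e2 eps C r.

Lemma profile_cont : contR e /\ contR e1.
Proof. split; eapply derivable_contR; [apply (prof_deriv0 _ _ _ _ _ _ Hp)|apply (prof_deriv1 _ _ _ _ _ _ Hp)]. Qed.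

Lemma profile_bound x : Rabs (e x) <= 1 + C.
Proof.
  pose proof (prof_close _ _ _ _ _ _ Hp x). pose proof (prof_r _ _ _ _ _ _ Hp). pose proof (prof_C _ _ _ _ _ _ Hp).
  pose proof (eta0_abs x). pose proof (Rabs_triang (e x - eta0 x) (eta0 x)).
  replace (e x - eta0 x + eta0 x) with (e x) in H3 by ring. nra.
Qed.

Lemma profile_sq x : Rabs (e x ^ 2 - rho0 x) <= C * (2 + C) * r.
Proof.
  pose proof (profile_bound x) as Hb. pose proof (prof_close _ _ _ _ _ _ Hp x) as H1.
  pose proof (prof_r _ _ _ _ _ _ Hp). pose proof (prof_C _ _ _ _ _ _ Hp).
  rewrite <- eta0_sq. replace (e x ^ 2 - eta0 x ^ 2) with ((e x - eta0 x) * (e x + eta0 x)) by ring.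
  rewrite Rabs_mult. pose proof (eta0_abs x). pose proof (Rabs_triang (e x) (eta0 x)).
  apply Rle_trans with ((C * r) * (2 + C)). apply Rmult_le_compat; auto using Rabs_pos. lra.
  lra.
Qed.

Lemma profile_quartic x : Rabs (e x ^ 4 - rho0 x ^ 2) <= C * (2 + C) * ((1 + C) ^ 2 + 1) * r.
Proof.
  pose proof (profile_bound x). pose proof (profile_sq x). pose proof (rho0_range x).
  replace (e x ^ 4 - rho0 x ^ 2) with ((e x ^ 2 - rho0 x) * (e x ^ 2 + rho0 x)) by ring.
  replace (C * (2 + C) * ((1 + C) ^ 2 + 1) * r) with (C * (2 + C) * r * ((1 + C) ^ 2 + 1)) by ring.
  rewrite Rabs_mult. apply Rmult_le_compat; auto using Rabs_pos.
  rewrite Rabs_right. rewrite <- (pow2_abs (e x)).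
  assert (Rabs (e x) ^ 2 <= (1 + C) ^ 2) by (apply pow_incr; split; auto using Rabs_pos). lra.
  pose proof (pow2_ge_0 (e x)). lra.
Qed.

Lemma profile_sq_near a x : -1 < a < 1 ->
  Rabs (e x ^ 2 - (1 - a ^ 2)) <= C * (2 + C) * r + 2 * Rabs (x - a).
Proof.
  intros Ha. pose proof (profile_sq x). pose proof (rho0_lipschitz a x Ha).
  replace (e x ^ 2 - (1 - a ^ 2)) with ((e x ^ 2 - rho0 x) + (rho0 x - (1 - a ^ 2))) by ring.
  eapply Rle_trans. apply Rabs_triang. lra.
Qed.

Lemma profile_quartic_near a x : -1 < a < 1 ->
  Rabs (e x ^ 4 - (1 - a ^ 2) ^ 2) <= C * (2 + C) * ((1 + C) ^ 2 + 1) * r + 4 * Rabs (x - a).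
Proof.
  intros Ha. pose proof (profile_quartic x). pose proof (rho0_lipschitz a x Ha).
  replace (e x ^ 4 - (1 - a ^ 2) ^ 2)
    with ((e x ^ 4 - rho0 x ^ 2) + (rho0 x - (1 - a ^ 2)) * (rho0 x + (1 - a ^ 2))) by ring.
  eapply Rle_trans. apply Rabs_triang. apply Rplus_le_compat. auto.
  rewrite Rabs_mult. pose proof (rho0_range x). pose proof (pow2_ge_0 a).
  assert (Rabs (rho0 x + (1 - a ^ 2)) <= 2) by (apply Rabs_le; nra).
  apply Rle_trans with (2 * Rabs (x - a) * 2). apply Rmult_le_compat; auto using Rabs_pos. lra.
Qed.

Lemma profile_decay_mul (g : R -> R) G n : (forall x, Rabs (g x) <= G) -> (1 <= n)%nat ->
  exists M K, forall x, M < Rabs x -> Rabs (e x ^ n * g x) <= K * exp (- Rabs x).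
Proof.
  intros Hg Hn. destruct (prof_decay _ _ _ _ _ _ Hp) as [M HM].
  exists M, G. intros x Hx. specialize (HM x Hx).
  assert (He : Rabs (e x) <= exp (- Rabs x)).
  { rewrite exp_Ropp. pose proof (exp_pos (Rabs x)).
    apply Rmult_le_reg_r with (exp (Rabs x)); auto. rewrite Rinv_l by lra. lra. }
  assert (He1 : Rabs (e x) <= 1).
  { pose proof (exp_ineq1_le (Rabs x)). pose proof (Rabs_pos x). pose proof (Rabs_pos (e x)). nra. }
  rewrite Rabs_mult, <- RPow_abs. destruct n as [|n]; [lia|]. simpl.
  assert (Rabs (e x) ^ n <= 1) by (rewrite <- (pow1 n); apply pow_incr; split; auto using Rabs_pos).
  pose proof (pow_le (Rabs (e x)) n (Rabs_pos (e x))).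
  pose proof (Hg x). pose proof (Rabs_pos (g x)).
  apply Rle_trans with (Rabs (e x) * G).
  - rewrite Rmult_assoc. apply Rmult_le_compat_l. apply Rabs_pos. nra.
  - rewrite Rmult_comm. apply Rmult_le_compat_l; auto. lra.
Qed.

(* Outside [-2, 2] the ODE gives eps^2 (e e1)' = eps^2 e1^2 + (x^2 - 1 + e^2) e^2
   >= 3 e^2, so the mass of e^2 there is controlled by the boundary values of
   eps^2 e e1, which are O(eps^2 / r). *)
Lemma tail_flux_deriv x :
  derivable_pt_lim (fun y => eps ^ 2 * e y * e1 y) x (eps ^ 2 * (e1 x * e1 x + e x * e2 x)).
Proof.
  eapply der_eq.
  apply der_mult; [apply der_mult; [apply der_const|apply (prof_deriv0 _ _ _ _ _ _ Hp)]
                  |apply (prof_deriv1 _ _ _ _ _ _ Hp)].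
  cbv beta. ring.
Qed.

Lemma tail_flux_ge x : 2 <= Rabs x -> 3 * e x ^ 2 <= eps ^ 2 * (e1 x * e1 x + e x * e2 x).
Proof.
  intros Hx. pose proof (prof_ode _ _ _ _ _ _ Hp x) as Hode.
  assert (Hx2 : 4 <= x ^ 2) by (rewrite <- (pow2_abs x); nra).
  assert (eps ^ 2 * (e x * e2 x) = (x ^ 2 - 1 + e x ^ 2) * e x ^ 2).
  { replace (eps ^ 2 * (e x * e2 x)) with (e x * (eps ^ 2 * e2 x)) by ring.
    replace (eps ^ 2 * e2 x) with (- ((1 - x ^ 2 - e x ^ 2) * e x)) by lra. ring. }
  pose proof (pow2_ge_0 (e x)). pose proof (pow2_ge_0 (e1 x)). pose proof (pow2_ge_0 eps).
  assert (0 <= eps ^ 2 * (e1 x * e1 x)) by (apply Rmult_le_pos; simpl in *; nra).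
  assert (3 * e x ^ 2 <= (x ^ 2 - 1 + e x ^ 2) * e x ^ 2) by nra.
  lra.
Qed.

Lemma tanh_tail c a u v : u <= v -> (forall x, u <= x <= v -> 2 <= Rabs x) ->
  Rabs (RI (fun x => e x ^ 2 * tanh (c * (x - a))) u v) <= 2 / 3 * (eps ^ 2 * (1 + C) * (C / r)).
Proof.
  intros Huv Hx. destruct profile_cont as [He He1]. pose proof (prof_cont2 _ _ _ _ _ _ Hp) as He2.
  eapply Rle_trans.
  { apply (RI_abs_le _ (fun x => / 3 * (eps ^ 2 * (e1 x * e1 x + e x * e2 x)))); auto; [cont|cont|].
    intros x Hxx. pose proof (tail_flux_ge x (Hx x Hxx)).
    rewrite Rabs_mult, <- RPow_abs, (pow2_abs (e x)). pose proof (tanh_abs (c * (x - a))).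
    pose proof (pow2_ge_0 (e x)). nra. }
  rewrite RI_scal by cont. rewrite (RI_FTC _ _ tail_flux_deriv) by cont.
  assert (forall y, Rabs (eps ^ 2 * e y * e1 y) <= eps ^ 2 * (1 + C) * (C / r)).
  { intros y. rewrite !Rabs_mult. rewrite (Rabs_right (eps ^ 2)) by (apply Rle_ge, pow2_ge_0).
    apply Rmult_le_compat; auto using Rabs_pos.
    apply Rmult_le_pos; [apply pow2_ge_0|apply Rabs_pos].
    apply Rmult_le_compat_l. apply pow2_ge_0. apply profile_bound. apply (prof_slope _ _ _ _ _ _ Hp). }
  pose proof (H v). pose proof (H u). apply Rabs_le_inv in H0. apply Rabs_le_inv in H1. lra.
Qed.

Variables (a c : R).
Hypotheses (ha : -1 < a < 1) (hc : 0 < c).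

Lemma tanh_moment :
  Rabs (ImpInt (fun x => e x ^ 2 * tanh (c * (x - a))) + 2 * quad_prim a)
   <= 4 / 3 * (eps ^ 2 * (1 + C) * (C / r)) + 4 * (C * (2 + C) * r) + 4 / c.
Proof.
  destruct profile_cont as [He He1].
  destruct (profile_decay_mul (fun x => tanh (c * (x - a))) 1 2) as [M [K HMK]];
    [intros; apply tanh_abs|lia|].
  replace (ImpInt (fun x => e x ^ 2 * tanh (c * (x - a))) + 2 * quad_prim a)
    with (ImpInt (fun x => e x ^ 2 * tanh (c * (x - a))) - - (2 * quad_prim a)) by ring.
  apply (ImpInt_bound _ K M); [cont|auto|].
  intros dl Hdl. exists 2. intros u v Hu Hv.
  set (f := fun x => e x ^ 2 * tanh (c * (x - a))).
  set (g := fun x => rho0 x * tanh (c * (x - a))).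
  assert (Hf : contR f) by (unfold f; cont). assert (Hg : contR g) by (unfold g; pose proof rho0_cont; cont).
  rewrite <- (RI_chasles f Hf u (-2)), <- (RI_chasles f Hf (-2) 2 v).
  assert (Hl : Rabs (RI f u (-2)) <= 2 / 3 * (eps ^ 2 * (1 + C) * (C / r))).
  { apply tanh_tail. lra. intros x Hx. rewrite Rabs_left1 by lra. lra. }
  assert (Hr : Rabs (RI f 2 v) <= 2 / 3 * (eps ^ 2 * (1 + C) * (C / r))).
  { apply tanh_tail. lra. intros x Hx. rewrite Rabs_right by lra. lra. }
  assert (Hfg : Rabs (RI f (-2) 2 - RI g (-2) 2) <= 4 * (C * (2 + C) * r)).
  { replace (RI f (-2) 2 - RI g (-2) 2) with (RI (fun x => f x + - (1) * g x) (-2) 2)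
      by (rewrite RI_lin by auto; ring).
    eapply Rle_trans. apply (RI_abs_le _ (fun _ => C * (2 + C) * r)); [cont|cont|lra|].
    - intros x _. unfold f, g.
      replace (e x ^ 2 * tanh (c * (x - a)) + - (1) * (rho0 x * tanh (c * (x - a))))
        with ((e x ^ 2 - rho0 x) * tanh (c * (x - a))) by ring.
      rewrite Rabs_mult. pose proof (profile_sq x). pose proof (tanh_abs (c * (x - a))).
      apply Rle_trans with (C * (2 + C) * r * 1). apply Rmult_le_compat; auto using Rabs_pos. lra.
    - rewrite RI_const. lra. }
  pose proof (tanh_moment_rho0 c a hc ha) as Hmid. fold g in Hmid.
  replace (RI f u (-2) + (RI f (-2) 2 + RI f 2 v) - - (2 * quad_prim a)) with
    (RI f u (-2) + RI f 2 v + (RI f (-2) 2 - RI g (-2) 2) + (RI g (-2) 2 + 2 * quad_prim a)) by ring.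
  apply Rabs_le_inv in Hl. apply Rabs_le_inv in Hr. apply Rabs_le_inv in Hfg.
  apply Rabs_le_inv in Hmid. apply Rabs_le. lra.
Qed.

Lemma sech2_moment :
  Rabs (ImpInt (fun x => e x ^ 2 * sech (c * (x - a)) ^ 2) - (1 - a ^ 2) * (2 / c))
    <= 2 * (C * (2 + C) * r) / c + 8 * 2 / c ^ 2.
Proof.
  destruct profile_cont as [He He1]. pose proof (prof_C _ _ _ _ _ _ Hp). pose proof (prof_r _ _ _ _ _ _ Hp).
  apply (localised_ImpInt (fun x => e x ^ 2) (fun x => sech (c * (x - a)) ^ 2) c a); auto.
  - cont.
  - cont.
  - apply Rmult_le_pos; [apply Rmult_le_pos|]; lra.
  - lra.
  - intros; apply profile_sq_near; auto.
  - intros; split; [apply pow2_ge_0|lra].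
  - apply Rabs_le. pose proof (pow2_ge_0 a). nra.
  - intros; apply sech2_mass; auto.
  - apply profile_decay_mul with 1. intros; rewrite Rabs_right by (apply Rle_ge, sech2_range); apply sech2_range. lia.
Qed.

Lemma sech4_moment :
  Rabs (ImpInt (fun x => e x ^ 2 * sech (c * (x - a)) ^ 4) - (1 - a ^ 2) * (4 / (3 * c)))
    <= 2 * (C * (2 + C) * r) / c + 8 * 2 / c ^ 2.
Proof.
  destruct profile_cont as [He He1]. pose proof (prof_C _ _ _ _ _ _ Hp). pose proof (prof_r _ _ _ _ _ _ Hp).
  apply (localised_ImpInt (fun x => e x ^ 2) (fun x => sech (c * (x - a)) ^ 4) c a); auto.
  - cont.
  - cont.
  - apply Rmult_le_pos; [apply Rmult_le_pos|]; lra.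
  - lra.
  - intros; apply profile_sq_near; auto.
  - intros; apply sech4_le.
  - apply Rabs_le. pose proof (pow2_ge_0 a). nra.
  - intros; apply sech4_mass; auto.
  - apply profile_decay_mul with 1.
    intros x; pose proof (sech4_le (c * (x - a))); pose proof (sech2_range (c * (x - a))).
    rewrite Rabs_right; lra.
    lia.
Qed.

Lemma quartic_sech4_moment :
  Rabs (ImpInt (fun x => e x ^ 4 * sech (c * (x - a)) ^ 4) - (1 - a ^ 2) ^ 2 * (4 / (3 * c)))
    <= 2 * (C * (2 + C) * ((1 + C) ^ 2 + 1) * r) / c + 8 * 4 / c ^ 2.
Proof.
  destruct profile_cont as [He He1]. pose proof (prof_C _ _ _ _ _ _ Hp). pose proof (prof_r _ _ _ _ _ _ Hp).
  apply (localised_ImpInt (fun x => e x ^ 4) (fun x => sech (c * (x - a)) ^ 4) c a); auto.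
  - cont.
  - cont.
  - pose proof (pow2_ge_0 (1 + C)).
    apply Rmult_le_pos; [apply Rmult_le_pos; [apply Rmult_le_pos|]|]; lra.
  - lra.
  - intros; apply profile_quartic_near; auto.
  - intros; apply sech4_le.
  - pose proof (pow2_ge_0 a). assert (0 <= 1 - a ^ 2 <= 1) by nra. apply Rabs_le. nra.
  - intros; apply sech4_mass; auto.
  - apply profile_decay_mul with 1.
    intros x; pose proof (sech4_le (c * (x - a))); pose proof (sech2_range (c * (x - a))).
    rewrite Rabs_right; lra.
    lia.
Qed.

(* The moment z sech^2 z: |e^2 z sech^2 z| <= (1 + C)^2 2 sech^2 (z/2),
   whose mass is 8/c. *)
Lemma z_sech2_moment :
  Rabs (ImpInt (fun x => e x ^ 2 * (c * (x - a)) * sech (c * (x - a)) ^ 2)) <= 8 * (1 + C) ^ 2 / c.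
Proof.
  destruct profile_cont as [He He1].
  destruct (profile_decay_mul (fun x => c * (x - a) * sech (c * (x - a)) ^ 2) 2 2) as [M [K HMK]];
    [intros; apply mul_sech2_bound|lia|].
  rewrite <- (Rminus_0_r (ImpInt _)).
  apply (ImpInt_bound _ K M); [cont|intros x Hx; rewrite Rmult_assoc; auto|].
  intros dl Hdl. exists 0. intros u v Hu Hv. rewrite Rminus_0_r.
  assert (Hc2 : 0 < c / 2) by lra.
  eapply Rle_trans.
  { apply (RI_abs_le _ (fun x => (1 + C) ^ 2 * 2 * sech (c / 2 * (x - a)) ^ 2)); [cont|cont|lra|].
    intros x _. pose proof (profile_bound x).
    pose proof (abs_mul_sech2 (c * (x - a))).
    replace (c * (x - a) / 2) with (c / 2 * (x - a)) in H0 by field.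
    rewrite (Rabs_mult (e x ^ 2 * _)), (Rabs_mult (e x ^ 2)), <- RPow_abs.
    rewrite (Rabs_right (sech _ ^ 2)) by (apply Rle_ge, pow2_ge_0).
    assert (Rabs (e x) ^ 2 <= (1 + C) ^ 2) by (apply pow_incr; split; auto using Rabs_pos).
    pose proof (pow2_ge_0 (Rabs (e x))).
    assert (0 <= Rabs (c * (x - a)) * sech (c * (x - a)) ^ 2)
      by (apply Rmult_le_pos; auto using Rabs_pos, pow2_ge_0).
    rewrite Rmult_assoc, (Rmult_assoc ((1 + C) ^ 2)). apply Rmult_le_compat; auto. }
  rewrite RI_scal by cont. destruct (sech2_partial_mass (c / 2) a Hc2 u v ltac:(lra)).
  pose proof (pow2_ge_0 (1 + C)).
  apply Rle_trans with ((1 + C) ^ 2 * 2 * (2 / (c / 2))). apply Rmult_le_compat_l; nra.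
  replace ((1 + C) ^ 2 * 2 * (2 / (c / 2))) with (8 * (1 + C) ^ 2 / c) by (field; lra). lra.
Qed.
End Profile.

Lemma cube_root_cube eps : 0 < eps -> Rpower eps (1 / 3) ^ 3 = eps.
Proof.
  intros H. rewrite <- Rpower_pow by apply exp_pos. rewrite Rpower_mult.
  replace (1 / 3 * INR 3) with 1 by (simpl; field). apply Rpower_1; auto.
Qed.

Lemma cube_root_lt eps t : 0 < eps -> 0 < t -> eps < t ^ 3 -> Rpower eps (1 / 3) < t.
Proof.
  intros Heps Ht H. assert (Rpower eps (1 / 3) < Rpower (t ^ 3) (1 / 3)) by (apply Rlt_Rpower_l; lra).
  rewrite <- (Rpower_pow 3 t Ht), Rpower_mult in H0. replace (INR 3 * (1 / 3)) with 1 in H0 by (simpl; field).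
  rewrite Rpower_1 in H0 by auto. exact H0.
Qed.

Lemma family_profile eps0 D : eta_family eps0 D -> exists C, forall eps, 0 < eps < 1 -> eps < eps0 ->
  profile (D 0%nat eps) (D 1%nat eps) (D 2%nat eps) eps C (Rpower eps (1 / 3)).
Proof.
  intros (_ & Hder & _ & Hode & Hdec & _ & _ & [C [HC Hglob]]).
  exists C. intros eps Heps Heps0. assert (He : 0 < eps < eps0) by lra.
  assert (Hr1 : Rpower eps (1 / 3) < 1) by (apply cube_root_lt; simpl; lra).
  constructor.
  - intros x; apply (Hder eps He 0%nat x).
  - intros x; apply (Hder eps He 1%nat x).
  - apply (derivable_contR _ (D 3%nat eps)). intros x; apply (Hder eps He 2%nat x).
  - apply Hode; auto.
  - destruct (Hdec eps He 1 1 ltac:(lra)) as [M HM]. exists M.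
    intros x Hx. specialize (HM x Hx). rewrite Rmult_1_l in HM. auto.
  - intros x. apply (Hglob eps He x).
  - intros x. destruct (Hglob eps He x) as (_ & G & _). rewrite Rpower_Ropp in G. exact G.
  - exact HC.
  - split; [apply exp_pos|lra].
Qed.

Instance ImpInt_pointwise : Proper (pointwise_relation R eq ==> eq) ImpInt.
Proof. intros f g H. f_equal. apply functional_extensionality. exact H. Qed.

Definition L_limit (B a b ad bd : R) : R :=
  - bd / sqrt (1 - b ^ 2) * (a - / 3 * a ^ 3)
  + b * sqrt (1 - b ^ 2) * (1 - a ^ 2) * ad
  + 2 / 3 * (1 - a ^ 2) * (1 - b ^ 2) * B
  + / (3 * B) * (1 - a ^ 2) ^ 2 * (1 - b ^ 2) ^ 2.

Lemma L_eps_decomposition e eps B a b ad bd Bd : 0 < eps -> 0 < B -> -1 < b < 1 ->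
  L_eps e eps B a b ad bd Bd / (2 * eps) - L_limit B a b ad bd =
    bd / (2 * sqrt (1 - b ^ 2))
      * (ImpInt (fun x => e x ^ 2 * tanh (B / eps * (x - a))) + 2 * quad_prim a)
  + b * sqrt (1 - b ^ 2) * B * ad / 2
      * ((ImpInt (fun x => e x ^ 2 * sech (B / eps * (x - a)) ^ 2) - (1 - a ^ 2) * (2 / (B / eps))) / eps)
  - b * sqrt (1 - b ^ 2) * Bd / (2 * B)
      * ImpInt (fun x => e x ^ 2 * (B / eps * (x - a)) * sech (B / eps * (x - a)) ^ 2)
  + (1 - b ^ 2) * B ^ 2 / 2
      * ((ImpInt (fun x => e x ^ 2 * sech (B / eps * (x - a)) ^ 4)
          - (1 - a ^ 2) * (4 / (3 * (B / eps)))) / eps)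
  + (1 - b ^ 2) ^ 2 / 4
      * ((ImpInt (fun x => e x ^ 4 * sech (B / eps * (x - a)) ^ 4)
          - (1 - a ^ 2) ^ 2 * (4 / (3 * (B / eps)))) / eps).
Proof.
  intros Heps hB hb.
  assert (Hs : 0 < sqrt (1 - b ^ 2)) by (apply sqrt_lt_R0; nra).
  assert (Hz : forall x, B * (x - a) / eps = B / eps * (x - a)) by (intros; field; lra).
  unfold L_eps, L_limit, quad_prim. setoid_rewrite Hz.
  field. lra.
Qed.

(* Rates: with c = B / eps and eps = r^3 <= r, every normalised error is
   bounded by a constant (depending only on C and B) times r. *)
Definition rate_tanh (C B : R) := 4 / 3 * (1 + C) * C + 4 * (C * (2 + C)) + 4 / B.
Definition rate_sech2 (C B : R) := 2 * (C * (2 + C)) / B + 8 * 2 / B ^ 2.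
Definition rate_z_sech2 (C B : R) := 8 * (1 + C) ^ 2 / B.
Definition rate_quartic (C B : R) := 2 * (C * (2 + C) * ((1 + C) ^ 2 + 1)) / B + 8 * 4 / B ^ 2.

Section Rates.
Variables (e e1 e2 : R -> R) (eps C r a B : R).
Hypotheses (Hp : profile e e1 e2 eps C r) (ha : -1 < a < 1) (hB : 0 < B) (Hr3 : r ^ 3 = eps).

Lemma rate_facts : 0 < eps /\ eps <= r /\ 0 < B / eps.
Proof.
  pose proof (prof_r _ _ _ _ _ _ Hp). rewrite <- Hr3.
  assert (0 < r ^ 3) by (apply pow_lt; lra).
  repeat split; auto. simpl; nra. apply Rdiv_lt_0_compat; lra.
Qed.

Lemma localised_rate X A L : 0 <= L ->
  Rabs X <= 2 * (A * r) / (B / eps) + 8 * L / (B / eps) ^ 2 ->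
  Rabs (X / eps) <= (2 * A / B + 8 * L / B ^ 2) * r.
Proof.
  intros HL HX. destruct rate_facts as (Heps & Hepsr & _).
  eapply Rle_trans. apply abs_div_le; [auto|exact HX].
  replace ((2 * (A * r) / (B / eps) + 8 * L / (B / eps) ^ 2) / eps)
    with (2 * A / B * r + 8 * L / B ^ 2 * eps) by (field; lra).
  assert (0 <= 8 * L / B ^ 2) by (apply div_nonneg; [lra|apply pow_lt; lra]).
  assert (8 * L / B ^ 2 * eps <= 8 * L / B ^ 2 * r) by (apply Rmult_le_compat_l; lra).
  lra.
Qed.

Lemma tanh_moment_rate :
  Rabs (ImpInt (fun x => e x ^ 2 * tanh (B / eps * (x - a))) + 2 * quad_prim a) <= rate_tanh C B * r.
Proof.
  destruct rate_facts as (Heps & Hepsr & Hc). pose proof (prof_r _ _ _ _ _ _ Hp).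
  pose proof (prof_C _ _ _ _ _ _ Hp).
  eapply Rle_trans. apply (tanh_moment e e1 e2 eps C r Hp a (B / eps)); auto.
  (* eps^2 / r = r^5 <= r and 1 / c = r^3 / B <= r / B *)
  replace (4 / 3 * (eps ^ 2 * (1 + C) * (C / r)) + 4 * (C * (2 + C) * r) + 4 / (B / eps))
    with (4 / 3 * (1 + C) * C * r ^ 5 + 4 * (C * (2 + C)) * r + 4 / B * eps)
    by (rewrite <- Hr3; field; lra).
  assert (r ^ 5 <= r) by (replace (r ^ 5) with (r * (r ^ 2 * r ^ 2)) by ring;
    assert (r ^ 2 * r ^ 2 <= 1) by (simpl; nra); nra).
  assert (0 <= 4 / 3 * (1 + C) * C) by (apply Rmult_le_pos; lra).
  assert (4 / B * eps <= 4 / B * r) by (apply Rmult_le_compat_l; [apply div_nonneg|]; lra).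
  unfold rate_tanh. rewrite !Rmult_plus_distr_r. assert (4 / 3 * (1 + C) * C * r ^ 5 <= 4 / 3 * (1 + C) * C * r)
    by (apply Rmult_le_compat_l; auto).
  lra.
Qed.

Lemma z_sech2_moment_rate :
  Rabs (ImpInt (fun x => e x ^ 2 * (B / eps * (x - a)) * sech (B / eps * (x - a)) ^ 2))
    <= rate_z_sech2 C B * r.
Proof.
  destruct rate_facts as (Heps & Hepsr & Hc).
  eapply Rle_trans. apply (z_sech2_moment e e1 e2 eps C r Hp a (B / eps)); auto.
  unfold rate_z_sech2. replace (8 * (1 + C) ^ 2 / (B / eps)) with (8 * (1 + C) ^ 2 / B * eps) by (field; lra).
  apply Rmult_le_compat_l; auto. apply div_nonneg; [pose proof (pow2_ge_0 (1 + C)); lra|lra].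
Qed.

End Rates.

Lemma abs_combination k1 k2 k3 k4 k5 x1 x2 x3 x4 x5 E1 E2 E3 E4 E5 r :
  Rabs x1 <= E1 * r -> Rabs x2 <= E2 * r -> Rabs x3 <= E3 * r -> Rabs x4 <= E4 * r -> Rabs x5 <= E5 * r ->
  Rabs (k1 * x1 + k2 * x2 - k3 * x3 + k4 * x4 + k5 * x5)
    <= (Rabs k1 * E1 + Rabs k2 * E2 + Rabs k3 * E3 + Rabs k4 * E4 + Rabs k5 * E5) * r.
Proof.
  assert (Hs : forall k x E, Rabs x <= E * r -> - (Rabs k * E * r) <= k * x <= Rabs k * E * r).
  { intros k x E H. apply Rabs_le_inv. rewrite Rabs_mult, Rmult_assoc.
    apply Rmult_le_compat_l; auto using Rabs_pos. }
  intros H1 H2 H3 H4 H5.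
  apply (Hs k1) in H1. apply (Hs k2) in H2. apply (Hs k3) in H3. apply (Hs k4) in H4. apply (Hs k5) in H5.
  apply Rabs_le. lra.
Qed.

Lemma L_eps_rate eps0 D B a b ad bd Bd : eta_family eps0 D -> 0 < B -> -1 < a < 1 -> -1 < b < 1 ->
  exists K, forall eps, 0 < eps < 1 -> eps < eps0 ->
    Rabs (L_eps (D 0%nat eps) eps B a b ad bd Bd / (2 * eps) - L_limit B a b ad bd)
      <= K * Rpower eps (1 / 3).
Proof.
  intros Hfam hB ha hb. destruct (family_profile eps0 D Hfam) as [C HC].
  set (s := sqrt (1 - b ^ 2)).
  exists (Rabs (bd / (2 * s)) * rate_tanh C B + Rabs (b * s * B * ad / 2) * rate_sech2 C B
          + Rabs (b * s * Bd / (2 * B)) * rate_z_sech2 C B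
          + Rabs ((1 - b ^ 2) * B ^ 2 / 2) * rate_sech2 C B
          + Rabs ((1 - b ^ 2) ^ 2 / 4) * rate_quartic C B).
  intros eps Heps Heps0.
  pose proof (HC eps Heps Heps0) as Hp. set (r := Rpower eps (1 / 3)) in *.
  assert (Hr3 : r ^ 3 = eps) by (apply cube_root_cube; lra).
  destruct (rate_facts _ _ _ _ _ _ B Hp hB Hr3) as (_ & _ & Hc).
  pose proof (prof_C _ _ _ _ _ _ Hp). pose proof (prof_r _ _ _ _ _ _ Hp).
  rewrite L_eps_decomposition by lra.
  apply abs_combination.
  - apply (tanh_moment_rate _ (D 1%nat eps) (D 2%nat eps)); auto.
  - apply (localised_rate _ _ _ _ _ _ _ Hp hB Hr3); [lra|].
    apply (sech2_moment _ (D 1%nat eps) (D 2%nat eps) eps C r); auto.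
  - apply (z_sech2_moment_rate _ (D 1%nat eps) (D 2%nat eps)); auto.
  - apply (localised_rate _ _ _ _ _ _ _ Hp hB Hr3); [lra|].
    apply (sech4_moment _ (D 1%nat eps) (D 2%nat eps) eps C r); auto.
  - apply (localised_rate _ _ _ _ _ _ _ Hp hB Hr3); [lra|].
    apply (quartic_sech4_moment _ (D 1%nat eps) (D 2%nat eps) eps C r); auto.
Qed.

Theorem lemma1 (eps0 : R) (D : nat -> R -> R -> R) (Hfam : eta_family eps0 D)
  (B a b ad bd Bd : R) (hB : 0 < B) (ha : -1 < a < 1) (hb : -1 < b < 1) :
  forall d, 0 < d -> exists e1, 0 < e1 /\
    forall eps, 0 < eps < e1 -> eps < eps0 ->
      Rabs (L_eps (D 0%nat eps) eps B a b ad bd Bd / (2 * eps)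
            - ( - bd / sqrt (1 - b ^ 2) * (a - / 3 * a ^ 3)
                + b * sqrt (1 - b ^ 2) * (1 - a ^ 2) * ad
                + 2 / 3 * (1 - a ^ 2) * (1 - b ^ 2) * B
                + / (3 * B) * (1 - a ^ 2) ^ 2 * (1 - b ^ 2) ^ 2)) < d.
Proof.
  destruct (L_eps_rate eps0 D B a b ad bd Bd Hfam hB ha hb) as [K HK].
  intros d Hd.
  (* eps^(1/3) < t as soon as eps < t^3, and |K| t < d *)
  set (t := d / (Rabs K + 1)).
  assert (Ht : 0 < t) by (apply Rdiv_lt_0_compat; pose proof (Rabs_pos K); lra).
  assert (HKt : Rabs K * t < d).
  { unfold t. apply Rmult_lt_reg_r with (Rabs K + 1). pose proof (Rabs_pos K); lra.
    replace (Rabs K * (d / (Rabs K + 1)) * (Rabs K + 1)) with (Rabs K * d) by (field; pose proof (Rabs_pos K); lra).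
    nra. }
  exists (Rmin 1 (t ^ 3)). split; [apply Rmin_pos; [lra|apply pow_lt; lra]|].
  intros eps [Heps He1] Heps0.
  pose proof (Rmin_l 1 (t ^ 3)). pose proof (Rmin_r 1 (t ^ 3)).
  assert (Hr : Rpower eps (1 / 3) < t) by (apply cube_root_lt; lra).
  assert (Hr0 : 0 < Rpower eps (1 / 3)) by apply exp_pos.
  eapply Rle_lt_trans. apply (HK eps); lra.
  apply Rle_lt_trans with (Rabs K * t); auto.
  apply Rle_trans with (Rabs K * Rpower eps (1 / 3)).
  - apply Rmult_le_compat_r; [lra|apply Rle_abs].
  - apply Rmult_le_compat_l; [apply Rabs_pos|lra].
Qed.
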